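(* Let $C_*^{\mathbb{Q}}$ be a chain complex of $\mathbb{Q}$-vector spaces, $C_*^{\mathbb{R}}=C_*^{\mathbb{Q}}\otimes_{\mathbb{Q}}\mathbb{R}$, and let $\|\cdot\|$ be a norm on $C_*^{\mathbb{R}}$. Let $a\in Z_n^{\mathbb{R}}$ be a real $n$-cycle whose homology class is rational, i.e. $[a]\in H_n(C_*^{\mathbb{Q}})\subseteq H_n(C_*^{\mathbb{R}})$. Then for every $\varepsilon>0$ there is a rational $n$-cycle $a'\in Z_n^{\mathbb{Q}}$ with $[a']=[a]$ in $H_n(C_*^{\mathbb{R}})$ and $\|a-a'\|\leq\varepsilon$.
   Context: $Z_n^{\mathbb{R}}$ and $Z_n^{\mathbb{Q}}$ denote the $n$-cycles of $C_*^{\mathbb{R}}$ and $C_*^{\mathbb{Q}}$; $H_n(C_*^{\mathbb{Q}})$ is viewed inside $H_n(C_*^{\mathbb{R}})\cong H_n(C_*^{\mathbb{Q}})\otimes_{\mathbb{Q}}\mathbb{R}$. *)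

From HB Require Import structures.
From mathcomp Require Import all_boot all_order all_algebra.
From mathcomp Require Import reals.
Set Implicit Arguments. Unset Strict Implicit. Unset Printing Implicit Defensive.
Import Order.TTheory GRing.Theory Num.Theory.
Local Open Scope ring_scope.

(* A Z-graded chain complex over the ring K: chain modules C i (i : int)
   and a family of linear maps d i j : C i -> C j which vanish unless
   j = i - 1 (so d (i) (i-1) is the boundary map d_i), with d o d = 0. *)
Definition chain_complex (K : pzRingType) (C : int -> lmodType K)
    (d : forall i j : int, {linear C i -> C j}) : Prop :=
  (forall i j : int, j + 1 != i -> forall x, d i j x = 0) /\
  (forall (i j k : int) x, d j k (d i j x) = 0).

Definition is_cycle (K : pzRingType) (C : int -> lmodType K)
    (d : forall i j : int, {linear C i -> C j}) (n : int) (x : C n) : Prop :=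
  d n (n - 1) x = 0.

Definition is_boundary (K : pzRingType) (C : int -> lmodType K)
    (d : forall i j : int, {linear C i -> C j}) (n : int) (x : C n) : Prop :=
  exists b : C (n + 1), d (n + 1) n b = x.

(* [iota : VQ -> VR] exhibits VR as VQ (x)_Q R: iota is Q-linear, its image
   spans VR over R, and Q-linearly independent families are sent to
   R-linearly independent families (i.e. the induced map VQ (x)_Q R -> VR
   is surjective and injective). *)
Definition scalar_extension (R : realType) (VQ : lmodType rat) (VR : lmodType R)
    (iota : VQ -> VR) : Prop :=
  [/\ (forall x y, iota (x + y) = iota x + iota y),
      (forall (q : rat) x, iota (q *: x) = ratr q *: iota x),
      (forall x : VR, exists (k : nat) (r : 'I_k -> R) (v : 'I_k -> VQ),
          x = \sum_(i < k) r i *: iota (v i))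
    & (forall (k : nat) (r : 'I_k -> R) (v : 'I_k -> VQ),
         (forall c : 'I_k -> rat, \sum_(i < k) c i *: v i = 0 -> forall i, c i = 0) ->
         \sum_(i < k) r i *: iota (v i) = 0 -> forall i, r i = 0)].

Definition is_norm (R : realType) (V : lmodType R) (N : V -> R) : Prop :=
  [/\ (forall x y, N (x + y) <= N x + N y),
      (forall (r : R) x, N (r *: x) = `|r| * N x)
    & (forall x, N x = 0 -> x = 0)].

From HB Require Import structures.
From mathcomp Require Import all_boot all_order all_algebra.
From mathcomp Require Import reals.
Set Implicit Arguments. Unset Strict Implicit. Unset Printing Implicit Defensive.
Import Order.TTheory GRing.Theory Num.Theory.
Local Open Scope ring_scope.

(* Since [[a]] is rational, [a - z = d b] for a rational cycle [z] and a real
   chain [b].  Rational chains are dense in real ones for every seminorm, in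
   particular for [N o d] (round the real coefficients of [b] in a rational
   spanning family), so some rational [s] has [N (d (b - s)) <= eps].  Then
   [a' := z + d s] is a rational cycle with [a - a' = d (b - s)]. *)

Definition is_seminorm (R : realType) (V : lmodType R) (M : V -> R) : Prop :=
  (forall x y, M (x + y) <= M x + M y) /\ (forall (r : R) x, M (r *: x) = `|r| * M x).

Section Seminorm.
Variables (R : realType) (V : lmodType R) (M : V -> R).
Hypothesis hM : is_seminorm M.

Lemma seminorm0 : M 0 = 0.
Proof. by rewrite -(scale0r (0 : V)) hM.2 normr0 mul0r. Qed.

Lemma seminorm_ge0 x : 0 <= M x.
Proof.
have hN : M (- x) = M x by rewrite -scaleN1r hM.2 normrN normr1 mul1r.
by have := hM.1 x (- x); rewrite subrr seminorm0 hN -mulr2n pmulrn_lge0.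
Qed.

Lemma seminorm_sum (k : nat) (f : 'I_k -> V) :
  M (\sum_(i < k) f i) <= \sum_(i < k) M (f i).
Proof.
elim/big_ind2: _ => [|x1 x2 y1 y2 h1 h2|//]; first by rewrite seminorm0.
exact: le_trans (hM.1 _ _) (lerD h1 h2).
Qed.

End Seminorm.

Lemma seminorm_comp_linear (R : realType) (U V : lmodType R)
    (f : {linear U -> V}) (N : V -> R) :
  is_norm N -> is_seminorm (N \o f).
Proof.
case=> tri hom _; split=> [x y | r x] /=; first by rewrite linearD tri.
by rewrite linearZ hom.
Qed.

Lemma ratr_approx (R : realType) (r c e : R) : 0 <= c -> 0 < e ->
  exists q : rat, `|r - ratr q| * c <= e.
Proof.
move=> c0 e0; have c1 : 0 < c + 1 := ltr_wpDl c0 ltr01.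
have lt_r : r - e / (c + 1) < r by rewrite gtrBl divr_gt0.
have [q] := rat_in_itvoo lt_r.
rewrite in_itv /= => /andP[ltrq ltqr]; exists q.
rewrite ger0_norm; last by rewrite subr_ge0 ltW.
apply: (@le_trans _ _ ((r - ratr q) * (c + 1))).
  by rewrite ler_wpM2l ?lerDl // subr_ge0 ltW.
by rewrite -ler_pdivlMr // lerBlDr -lerBlDl ltW.
Qed.

Section ScalarExtension.
Variables (R : realType) (VQ : lmodType rat) (VR : lmodType R) (iota : VQ -> VR).
Hypothesis hiota : scalar_extension iota.

Lemma scalar_extension0 : iota 0 = 0.
Proof.
case: hiota => hadd _ _ _.
by apply: (addrI (iota 0)); rewrite -hadd !addr0.
Qed.

Lemma scalar_extension_sum (k : nat) (q : 'I_k -> rat) (v : 'I_k -> VQ) :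
  iota (\sum_(i < k) q i *: v i) = \sum_(i < k) ratr (q i) *: iota (v i).
Proof.
case: hiota => hadd hscale _ _.
elim/big_rec2: _ => [|i y1 y2 _ <-]; first exact: scalar_extension0.
by rewrite hadd hscale.
Qed.

Lemma scalar_extension_dense (M : VR -> R) : is_seminorm M ->
  forall (x : VR) (eps : R), 0 < eps -> exists y : VQ, M (x - iota y) <= eps.
Proof.
move=> hM x eps eps0; case: hiota => _ _ /(_ x) [k [r [v ->]]] _.
have e0 : 0 < eps / k.+1%:R by rewrite divr_gt0.
have /fin_all_exists [q hq] : forall i : 'I_k, exists q : rat,
    `|r i - ratr q| * M (iota (v i)) <= eps / k.+1%:R.
  by move=> i; apply: ratr_approx; rewrite ?(seminorm_ge0 hM).
exists (\sum_(i < k) q i *: v i).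
rewrite scalar_extension_sum -sumrB.
under eq_bigr do rewrite -scalerBl.
apply: le_trans (seminorm_sum hM _) _.
apply: le_trans (_ : \sum_(i < k) eps / k.+1%:R <= eps).
  by apply: ler_sum => i _; rewrite hM.2.
rewrite sumr_const card_ord -[_ *+ k]mulr_natr mulrAC ler_pdivrMr ?ltr0Sn //.
by rewrite ler_wpM2l ?ler_nat // ltW.
Qed.

End ScalarExtension.

Theorem lemma2p14 (R : realType)
    (CQ : int -> lmodType rat) (dQ : forall i j : int, {linear CQ i -> CQ j})
    (CR : int -> lmodType R) (dR : forall i j : int, {linear CR i -> CR j})
    (iota : forall i : int, CQ i -> CR i)
    (N : forall i : int, CR i -> R)
    (hQ : chain_complex dQ)
    (hR : chain_complex dR)
    (hiota : forall i : int, scalar_extension (iota i))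
    (hchain : forall (i j : int) (x : CQ i), iota j (dQ i j x) = dR i j (iota i x))
    (hN : forall i : int, is_norm (N i))
    (n : int) (a : CR n)
    (ha : is_cycle dR a)
    (hrat : exists z : CQ n, is_cycle dQ z /\ is_boundary dR (a - iota n z))
    (eps : R) (heps : 0 < eps) :
  exists a' : CQ n,
    [/\ is_cycle dQ a', is_boundary dR (a - iota n a') & N n (a - iota n a') <= eps].
Proof.
case: hrat => z [hz [b hb]].
have [s hs] := scalar_extension_dense (hiota (n + 1))
  (seminorm_comp_linear (dR (n + 1) n) (hN n)) b heps.
have hdiff : a - iota n (z + dQ (n + 1) n s) = dR (n + 1) n (b - iota (n + 1) s).
  case: (hiota n) => hadd _ _ _.
  by rewrite hadd opprD addrA -hb hchain linearB.
exists (z + dQ (n + 1) n s); rewrite hdiff; split.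
- by rewrite /is_cycle linearD /= hz add0r hQ.2.
- by exists (b - iota (n + 1) s).
- exact: hs.
Qed.
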